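(* Under the recursive network formation model with the utility function described in the context, the following hold. 1. If $c>b_1$ (for any $c_0$), no node ever enters. The resulting single-node network (which is both a star and a null graph) is efficient. 2. If the conditions $b_1-b_2+\gamma b_2\le c<b_1$ and $c_0<(1-\gamma)(b_2-b_3)$ hold, then the star network formed is efficient, for every number of nodes. 3. If the conditions $c<b_1-b_2$ and $c_0\le(1-\gamma)b_2$ hold, then the complete network formed is efficient, for every number of nodes.
   Context: Networks are finite simple undirected graphs whose vertices (nodes) are self-interested agents. Parameters: benefits $b_1>b_2>b_3>\dots>0$, where $b_i$ is the benefit a node obtains from a node at distance $i$; a link cost $c$ per immediate neighbor; an intermediation fraction $\gamma$ with $0\le\gamma<1$; and a network entry factor $c_0$. Notation: $N$ is the set of nodes currently in the network, $d_j$ the degree of $j$, and $l(j,w)$ the graph distance. A node $x$ is essential for a pair $y,z$ (with $x\notin\{y,z\}$) if $x$ lies on every path joining $y$ and $z$. Write $E(y,z)$ for the set of nodes essential for $y,z$ and $e(y,z)=|E(y,z)|$. Only pairs joined by a path contribute to the sums below. Utility of node $j$ in network $g$: $$u_j(g)=-c_0\,d_{T(j)}\mathbf 1_{\{j=\mathrm{NE}\}}+d_j(b_1-c)+\sum_{w\in N,\ l(j,w)>1}b_{l(j,w)}-\sum_{w\in N,\ E(j,w)\ne\emptyset}\gamma\, b_{l(j,w)}+\sum_{y,z\in N,\ j\in E(y,z)}\frac{\gamma}{e(y,z)}\,2\,b_{l(y,z)}.$$ Here $\mathbf 1_{\{j=\mathrm{NE}\}}=1$ exactly when $j$ is a newly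 entering node evaluating the creation of its first link. $T(j)$ is the existing node to which $j$ forms that first link, and $d_{T(j)}$ is that node's degree before the link. The network before entry gives the entering node utility $0$. Pairwise stability: $g$ is pairwise stable if (a) for every link $(i,j)\in g$, $u_i(g\setminus\{(i,j)\})\le u_i(g)$ and $u_j(g\setminus\{(i,j)\})\le u_j(g)$; and (b) for every non-link $(i,j)\notin g$, if $u_i(g\cup\{(i,j)\})>u_i(g)$ then $u_j(g\cup\{(i,j)\})<u_j(g)$. Recursive model of network formation: - The process starts with a single node. - When the current network of $n-1$ nodes is pairwise stable, a new node considers entering. Its options are to stay out or to propose a link to one existing node. The link forms iff the receiving node's utility does not decrease. No existing node can link to the newcomer before it has formed this first link. - After entry, nodes are repeatedly chosen at random to move. A chosen node plays a myopic best response among three options: create a link with a non-neighbor (the link forms only if the other node's utility does not decrease, which the proposer anticipates); delete a link with a neighbor (unilaterally); or keep the status quo. It alters a link only if this strictly increases its current utility. - This continues until the network is pairwise stable; then the next node considers entering, and so on. Efficiency: since intermediation rents are transfers and each node pays the entry fee at most once, the welfare of a network $g$ on node set $N$ is $$W(g)=\sum_{j\in N}\Big(d_j(b_1-c)+\sum_{w\in N,\ l(j,w)>1}b_{l(j,w)}\Big).$$ The network $g$ is efficient if $W(g)\ge W(g')$ for every network $g'$ on the same node set $N$. *)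

(* Networks on node set 'I_n are simple graphs given by a
   symmetric irreflexive boolean relation on 'I_n. *)
From HB Require Import structures.
From mathcomp Require Import all_boot all_order all_algebra.
Set Implicit Arguments. Unset Strict Implicit. Unset Printing Implicit Defensive.
Import Order.TTheory GRing.Theory Num.Theory.

Section Model.
Variable R : realFieldType.

Local Open Scope ring_scope.

Definition simple n (g : rel 'I_n) : Prop :=
  (forall u v, g u v = g v u) /\ (forall u, g u u = false).

Definition deg n (g : rel 'I_n) (j : 'I_n) : nat := #|[pred v | g j v]|.

Definition walk_k n (g : rel 'I_n) (y z : 'I_n) (k : nat) : bool :=
  [exists p : k.-tuple 'I_n, path g y p && (last y p == z)].

(* graph distance l(y,z): least number of edges of a walk (= path) from y to z;
   only used for pairs joined by a path (for which it is < n) *)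
Definition dist n (g : rel 'I_n) (y z : 'I_n) : nat :=
  find (walk_k g y z) (iota 0 n).

(* x is essential for y,z: x \notin {y,z}, y and z are joined by a path,
   and every path joining y and z contains x (no path avoids x) *)
Definition avoid n (g : rel 'I_n) (x : 'I_n) : rel 'I_n :=
  fun u v => [&& g u v, u != x & v != x].

Definition essential n (g : rel 'I_n) (x y z : 'I_n) : bool :=
  [&& x != y, x != z, connect g y z & ~~ connect (avoid g x) y z].

Definition ness n (g : rel 'I_n) (y z : 'I_n) : nat :=
  #|[pred x | essential g x y z]|.

Variables (b : nat -> R) (c gamma c0 : R).

(* utility u_j(g) without the entry term (i.e. for j not a newly entering node).
   The intermediation-income sum is over unordered pairs {y,z} (y < z). *)
Definition util n (g : rel 'I_n) (j : 'I_n) : R :=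
  (deg g j)%:R * (b 1%N - c)
  + \sum_(w : 'I_n | connect g j w && (1 < dist g j w)%N) b (dist g j w)
  - \sum_(w : 'I_n | [exists x, essential g x j w]) gamma * b (dist g j w)
  + \sum_(y : 'I_n) \sum_(z : 'I_n | (y < z)%N && essential g j y z)
        gamma / (ness g y z)%:R * 2%:R * b (dist g y z).

Definition addl n (g : rel 'I_n) (i j : 'I_n) : rel 'I_n :=
  fun u v => [|| g u v, (u == i) && (v == j) | (u == j) && (v == i)].

Definition dell n (g : rel 'I_n) (i j : 'I_n) : rel 'I_n :=
  fun u v => g u v && ~~ (((u == i) && (v == j)) || ((u == j) && (v == i))).

Definition pairwise_stable n (g : rel 'I_n) : Prop :=
  (forall i j, g i j ->
     util (dell g i j) i <= util g i /\ util (dell g i j) j <= util g j) /\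
  (forall i j, i != j -> ~~ g i j ->
     util g i < util (addl g i j) i -> util (addl g i j) j < util g j).

Definition feasible n (g : rel 'I_n) (i : 'I_n) (h : rel 'I_n) : Prop :=
  h = g \/
  (exists j, g i j /\ h = dell g i j) \/
  (exists j, j != i /\ ~~ g i j /\ util g j <= util (addl g i j) j /\ h = addl g i j).

Definition move n (g g' : rel 'I_n) : Prop :=
  exists i, [/\ feasible g i g', util g i < util g' i &
                forall h, feasible g i h -> util h i <= util g' i].

(* network after a newcomer (node n, = ord_max) links to t : 'I_n *)
Definition ext n (g : rel 'I_n) (t : 'I_n) : rel 'I_n.+1 :=
  fun u v =>
    match unlift ord_max u, unlift ord_max v with
    | Some a, Some b => g a b
    | None, Some b => b == t
    | Some a, None => a == t
    | None, None => false
    end.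

Definition entrant_util n (g : rel 'I_n) (t : 'I_n) : R :=
  util (ext g t) ord_max - c0 * (deg g t)%:R.

Definition accepts n (g : rel 'I_n) (t : 'I_n) : Prop :=
  util g t <= util (ext g t) (widen_ord (leqnSn n) t).

Definition entry_choice n (g : rel 'I_n) (t : 'I_n) : Prop :=
  [/\ accepts g t, 0 < entrant_util g t &
      forall t', accepts g t' -> entrant_util g t' <= entrant_util g t].

Inductive visited : forall n, rel 'I_n -> Prop :=
| visited_init : visited (fun _ _ : 'I_1 => false)
| visited_entry n (g : rel 'I_n) t :
    visited g -> pairwise_stable g -> entry_choice g t -> visited (ext g t)
| visited_move n (g g' : rel 'I_n) :
    visited g -> ~ pairwise_stable g -> move g g' -> visited g'.

End Model.

Section Welfare.
Variable R : realFieldType.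
Local Open Scope ring_scope.
Variables (b : nat -> R) (c : R).

Definition welfare n (g : rel 'I_n) : R :=
  \sum_(j : 'I_n) ((deg g j)%:R * (b 1%N - c)
    + \sum_(w : 'I_n | connect g j w && (1 < dist g j w)%N) b (dist g j w)).

Definition efficient n (g : rel 'I_n) : Prop :=
  forall g' : rel 'I_n, simple g' -> welfare g' <= welfare g.
End Welfare.

(* We split the utility of a node j into a sum over the other nodes
   w of a "pair payoff" (the link value b1 - c if j ~ w, otherwise the benefit
   b_{l(j,w)} net of the intermediation toll) plus j's intermediation rent; the
   welfare splits likewise into a sum of "pair welfares".  With this split:
   - adding a link ij raises the utility of i by at least (b1 - c) minus the
     old pair payoff of i from j (distances shrink, rents only grow); hence if
     c < b1 - b2 every pairwise stable network is complete, and the complete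
     network is efficient since every pair then gets its maximal value b1 - c;
   - in the regime of part 2 the star is pairwise stable, a newcomer always
     prefers to link to the centre of a star, so every visited network is a
     star; the star is efficient because every network has at least as many
     ordered pairs that are adjacent or disconnected (found with a BFS parent
     map from the centre) as the star has;
   - if c > b1 the first entrant would get b1 - c < 0, so nobody ever enters. *)
From HB Require Import structures.
From mathcomp Require Import all_boot all_order all_algebra.
From mathcomp Require Import ring lra zify.
Import Order.TTheory GRing.Theory Num.Theory.
Set Implicit Arguments. Unset Strict Implicit. Unset Printing Implicit Defensive.

Section Distances.
Variable n : nat.
Implicit Types (g h : rel 'I_n) (x y z u v w : 'I_n).

Lemma walk_kP g y z k :
  reflect (exists s : seq 'I_n, [/\ size s = k, path g y s & last y s = z])
          (walk_k g y z k).
Proof.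
apply: (iffP existsP) => [[p /andP[hp /eqP hl]] | [s [hs hp hl]]].
- by exists p; rewrite size_tuple.
- have hs' : size s == k by rewrite hs.
  by exists (Tuple hs'); rewrite /= hp hl eqxx.
Qed.

Lemma walk0 g y z : walk_k g y z 0 = (y == z).
Proof.
apply/walk_kP/eqP => [[s [/size0nil -> _ <-]] // | ->].
by exists [::].
Qed.

Lemma walk1 g y z : walk_k g y z 1 = g y z.
Proof.
apply/walk_kP/idP => [[[|a [|? ?]] [//= _ /andP[h _] <-]] // | h].
by exists [:: z]; rewrite /= h.
Qed.

Lemma walk2 g y z : walk_k g y z 2 = [exists x, g y x && g x z].
Proof.
apply/walk_kP/existsP => [[[|a [|a' [|? ?]]] [//= _ /and3P[h1 h2 _] <-]]
                         | [x /andP[h1 h2]]].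
  by exists a; rewrite h1.
by exists [:: x; z]; rewrite /= h1 h2.
Qed.

Lemma connect_mono g h y z : subrel g h -> connect g y z -> connect h y z.
Proof. by move=> sub; apply: connect_sub => u v /sub; apply: connect1. Qed.

Lemma dist_le g y z k : walk_k g y z k -> (dist g y z <= k)%N.
Proof.
rewrite /dist => hw; case: (leqP (find (walk_k g y z) (iota 0 n)) k) => // hlt.
have hk : (k < n)%N.
  by apply: (leq_trans hlt); have := find_size (walk_k g y z) (iota 0 n);
     rewrite size_iota.
by move: (before_find 0 hlt); rewrite nth_iota // add0n hw.
Qed.

(* ... and between connected nodes it is attained: a shortest walk is a
   simple path, hence has fewer than n steps and lies in the search range. *)
Lemma dist_walk g y z : connect g y z -> walk_k g y z (dist g y z).
Proof.
case/connectP => p hp ->; case: (shortenP hp) => p' hp' hu _.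
have hsz : (size p' < n)%N.
  by have := max_card (mem (y :: p')); rewrite card_ord (card_uniqP hu).
have hw : walk_k g y (last y p') (size p') by apply/walk_kP; exists p'.
have hh : has (walk_k g y (last y p')) (iota 0 n).
  by apply/hasP; exists (size p'); rewrite // mem_iota.
have hlt : (dist g y (last y p') < n)%N by have := hh; rewrite has_find size_iota.
by have := nth_find 0 hh; rewrite nth_iota ?add0n.
Qed.

Lemma dist_ge g y z k : connect g y z ->
  (forall m, (m < k)%N -> ~~ walk_k g y z m) -> (k <= dist g y z)%N.
Proof.
move=> hc hk; rewrite leqNgt; apply/negP => hlt.
by move: (hk _ hlt); rewrite dist_walk.
Qed.

Lemma dist_self g y : dist g y y = 0%N.
Proof.
rewrite /dist; have -> : iota 0 n = 0%N :: iota 1 n.-1.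
  by rewrite -(prednK (leq_ltn_trans (leq0n _) (ltn_ord y))).
by rewrite /= walk0 eqxx.
Qed.

Lemma dist_pos g y z : connect g y z -> y != z -> (1 <= dist g y z)%N.
Proof.
move=> hc hyz; apply: dist_ge => // m; rewrite ltnS leqn0 => /eqP ->.
by rewrite walk0.
Qed.

Lemma dist_mono g h y z : subrel g h -> connect g y z ->
  (dist h y z <= dist g y z)%N.
Proof.
move=> sub /dist_walk /walk_kP[s [hs hp hl]]; apply: dist_le.
by apply/walk_kP; exists s; split=> //; apply: sub_path hp.
Qed.

Lemma dist_adj g y z : g y z -> y != z -> dist g y z = 1%N.
Proof.
move=> hg hyz; apply/eqP; rewrite eqn_leq dist_le ?walk1 //=.
by apply: dist_pos => //; apply: connect1.
Qed.

Lemma connect_stuck (e : rel 'I_n) y z :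
  (forall v, ~~ e y v) -> connect e y z -> z = y.
Proof.
move=> hn /connectP[[|a p] /= hp ->] //.
by move: hp (hn a) => /andP[-> _].
Qed.

Lemma connect_closedP (e : rel 'I_n) (S : pred 'I_n) y z :
  (forall u v, S u -> e u v -> S v) -> S y -> connect e y z -> S z.
Proof.
move=> hS hy /connectP[p hp ->].
elim: p y hy hp => [|a p IH] y hy //= /andP[h1 h2].
exact: IH (hS _ _ hy h1) h2.
Qed.

Lemma ess_conn g x y z : essential g x y z -> connect g y z.
Proof. by case/and4P. Qed.

Lemma ess_neq g x y z : essential g x y z -> y != z.
Proof. by case/and4P => _ _ _; apply: contraNneq => ->; rewrite connect0. Qed.

Lemma ess_dist g x y z : essential g x y z -> (2 <= dist g y z)%N.
Proof.
case/and4P=> hxy hxz hc hav; apply: dist_ge => //.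
case=> [_|[_|//]]; first by rewrite walk0; apply: contraNneq hav => ->.
rewrite walk1; apply: contraNN hav => hg; apply: connect1.
by rewrite /avoid hg eq_sym hxy eq_sym hxz.
Qed.

Lemma ess_mono g h x y z : subrel g h -> connect g y z ->
  essential h x y z -> essential g x y z.
Proof.
move=> sub hc /and4P[h1 h2 _ h4]; apply/and4P; split => //.
apply: contra h4; apply: connect_mono => u v /and3P[? ? ?].
by apply/and3P; split => //; apply: sub.
Qed.

Lemma ness_mono g h y z : subrel g h -> connect g y z ->
  (ness h y z <= ness g y z)%N.
Proof.
move=> sub hc; apply: subset_leq_card; apply/subsetP => x.
by rewrite !inE; apply: ess_mono.
Qed.

Lemma ness_pos g x y z : essential g x y z -> (0 < ness g y z)%N.
Proof. by move=> he; apply/card_gt0P; exists x; rewrite inE. Qed.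

Lemma not_ess_hub g x hb y z : x != hb ->
  (forall u, u != x -> u != hb -> g u hb && g hb u) -> ~~ essential g x y z.
Proof.
move=> hx hh; apply/negP => /and4P[hxy hxz _ /negP[]].
have hyh : connect (avoid g x) y hb.
  case: (eqVneq y hb) => [->|hyb]; first exact: connect0.
  have hyx : y != x by rewrite eq_sym.
  apply: connect1; case/andP: (hh y hyx hyb) => h1 _.
  by rewrite /avoid h1 hyx eq_sym hx.
apply: (connect_trans hyh).
case: (eqVneq z hb) => [->|hzb]; first exact: connect0.
apply: connect1; have hzx : z != x by rewrite eq_sym.
by case/andP: (hh z hzx hzb) => _ h1; rewrite /avoid h1 hzx eq_sym hx.
Qed.

End Distances.

Definition isstar n (g : rel 'I_n) (ctr : 'I_n) :=
  forall u v, g u v = (u != v) && ((u == ctr) || (v == ctr)).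

Section Star.
Variables (n : nat) (g : rel 'I_n) (ctr : 'I_n).
Hypothesis hst : isstar g ctr.

Lemma star_sym u v : g u v = g v u.
Proof. by rewrite !hst eq_sym orbC. Qed.

Lemma star_irr u : g u u = false.
Proof. by rewrite hst eqxx. Qed.

Lemma star_conn u v : connect g u v.
Proof.
have to_ctr w : connect g w ctr.
  case: (eqVneq w ctr) => [->|hw]; first exact: connect0.
  by apply: connect1; rewrite hst hw eqxx orbT.
by apply: connect_trans (to_ctr u) _; rewrite (sym_connect_sym star_sym).
Qed.

Lemma star_dist u v :
  dist g u v = if u == v then 0 else if (u == ctr) || (v == ctr) then 1 else 2.
Proof.
case: (eqVneq u v) => [->|huv]; first exact: dist_self.
case: ifP => hc; first by apply: dist_adj => //; rewrite hst huv hc.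
apply/eqP; rewrite eqn_leq; apply/andP; split.
  apply: dist_le; rewrite walk2; apply/existsP; exists ctr.
  by rewrite !hst eqxx !orbT /=; move/norP: hc => [h1 h2]; rewrite h1 eq_sym h2.
apply: dist_ge; first exact: star_conn.
case=> [_|[_|//]]; first by rewrite walk0.
by rewrite walk1 hst hc andbF.
Qed.

Lemma star_ess x y z :
  essential g x y z = [&& x == ctr, y != ctr, z != ctr & y != z].
Proof.
apply/idP/idP => [he | /and4P[/eqP -> hy hz hyz]].
  have /eqP hx : x == ctr.
    apply: contraT => hx; have := @not_ess_hub _ g x ctr y z hx.
    rewrite he; apply => u hux huc.
    by rewrite !hst eqxx orbT andbT (eq_sym ctr) huc.
  case/and4P: (he) => h1 h2 _ _.
  by rewrite hx eqxx -hx eq_sym h1 eq_sym h2 (ess_neq he).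
apply/and4P; split; rewrite ?(eq_sym ctr) ?star_conn //.
have hstuck v : ~~ avoid g ctr y v.
  by rewrite /avoid hst (negbTE hy) /=; case: (v == ctr); rewrite ?andbF ?andbT.
by apply/negP => /(connect_stuck hstuck) hzy; rewrite hzy eqxx in hyz.
Qed.

Lemma star_ness y z :
  ness g y z = if [&& y != ctr, z != ctr & y != z] then 1%N else 0%N.
Proof.
rewrite /ness; case: ifP => hc.
  by rewrite -(card1 ctr); apply: eq_card => x; rewrite !inE star_ess hc andbT.
by apply: eq_card0 => x; rewrite !inE star_ess hc andbF.
Qed.

End Star.

(* On at most two nodes any two distinct nodes cover the network, so a star
   may take any node as its centre. *)
Lemma star_small_centre n (g : rel 'I_n) ctr t : (n <= 2)%N -> isstar g ctr -> isstar g t.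
Proof.
move=> hn hst u v; rewrite hst; case: (eqVneq u v) => //= huv.
have cover (x : 'I_n) : (u == x) || (v == x).
  move: huv; rewrite -!val_eqE /=.
  by have := ltn_ord u; have := ltn_ord v; have := ltn_ord x; lia.
by rewrite !cover.
Qed.

Lemma exists_third n (x y : 'I_n) : (2 < n)%N -> exists v, (v != x) && (v != y).
Proof.
move=> hn; have : (0 < #|~: [set x; y]|)%N.
  rewrite (cardsCs (~: [set x; y])) setCK card_ord cards2.
  by case: (x != y); rewrite subn_gt0 //; apply: ltnW.
by case/card_gt0P => v; rewrite in_setC in_set2 negb_or => hv; exists v.
Qed.

(* The network after entry: old nodes are embedded by widening, and the
   newcomer is the last node ord_max. *)
Section Extension.
Variable n : nat.
Implicit Types (g : rel 'I_n) (a t : 'I_n).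

Notation wid := (widen_ord (leqnSn n)).

Lemma wid_lift a : wid a = lift ord_max a.
Proof. by apply: val_inj; rewrite /= /bump leqNgt ltn_ord. Qed.

Lemma ordS_case (x : 'I_n.+1) : x = ord_max \/ exists a, x = wid a.
Proof.
by case: (unliftP ord_max x) => [a ->|->]; [right; exists a; rewrite wid_lift | left].
Qed.

Lemma wid_eq a a' : (wid a == wid a') = (a == a').
Proof. by rewrite !wid_lift (inj_eq lift_inj). Qed.

Lemma wid_neqN a : (wid a == ord_max) = false.
Proof. by rewrite wid_lift eq_sym (negbTE (neq_lift _ _)). Qed.

Lemma ext_ww g t a a' : ext g t (wid a) (wid a') = g a a'.
Proof. by rewrite /ext !wid_lift !liftK. Qed.

Lemma ext_Nw g t a : ext g t ord_max (wid a) = (a == t).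
Proof. by rewrite /ext unlift_none wid_lift liftK. Qed.

Lemma ext_wN g t a : ext g t (wid a) ord_max = (a == t).
Proof. by rewrite /ext unlift_none wid_lift liftK. Qed.

Lemma ext_NN g t : ext g t ord_max ord_max = false.
Proof. by rewrite /ext unlift_none. Qed.

Lemma ext_star g t : isstar g t -> isstar (ext g t) (wid t).
Proof.
move=> hst u v.
case: (ordS_case u) => [->|[a ->]]; case: (ordS_case v) => [->|[a' ->]].
- by rewrite ext_NN eqxx.
- by rewrite ext_Nw !(eq_sym ord_max) !wid_neqN wid_eq.
- by rewrite ext_wN !(eq_sym ord_max) !wid_neqN wid_eq orbF.
- by rewrite ext_ww hst !wid_eq.
Qed.

End Extension.

Section BFSParent.
Variables (n : nat) (g : rel 'I_n) (ctr : 'I_n).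

Definition par (w : 'I_n) : 'I_n :=
  odflt ctr [pick u | g u w && (dist g ctr u < dist g ctr w)%N].

Lemma parP w : connect g ctr w -> w != ctr ->
  g (par w) w && (dist g ctr (par w) < dist g ctr w)%N.
Proof.
move=> hc hw; rewrite /par; case: pickP => [u hu | hnone] //=.
exfalso; have := dist_pos hc; rewrite eq_sym => /(_ hw).
have /walk_kP[s [hs hp hl]] := dist_walk hc.
case/lastP: s hs hp hl => [<- //|s' x]; rewrite size_rcons last_rcons => hs.
rewrite rcons_path => /andP[hp1 hp2] hl _; rewrite hl in hp2.
have hw' : walk_k g ctr (last ctr s') (size s') by apply/walk_kP; exists s'.
have := hnone (last ctr s'); rewrite /= hp2 -hs ltnS.
by rewrite (dist_le hw').
Qed.

End BFSParent.

Local Open Scope ring_scope.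

Section Payoffs.
Variable R : realFieldType.
Variables (b : nat -> R) (c gamma : R).
Hypothesis hb : forall k : nat, (0 < k)%N -> 0 < b k.+1 /\ b k.+1 < b k.
Hypothesis hg0 : 0 <= gamma.
Hypothesis hg1 : gamma < 1.

Lemma b_pos k : (0 < k)%N -> 0 < b k.
Proof.
case: k => [//|[_|k _]]; last by case: (hb (isT : (0 < k.+1)%N)).
by case: (hb (isT : (0 < 1)%N)) => h1 h2; lra.
Qed.

Lemma b_anti m k : (0 < m)%N -> (m <= k)%N -> b k <= b m.
Proof.
move=> hm; elim: k => [|k IH]; first by rewrite leqn0 => /eqP h; rewrite h in hm.
rewrite leq_eqVlt => /orP[/eqP ->//|]; rewrite ltnS => hmk.
have [_ /ltW hlt] := hb (leq_trans hm hmk).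
exact: le_trans hlt (IH hmk).
Qed.

Lemma one_sub_gamma_ge0 : 0 <= 1 - gamma.
Proof. by rewrite subr_ge0 ltW. Qed.

Section Decomposition.
Variable n : nat.
Implicit Types (g h : rel 'I_n) (x y z u v w i j : 'I_n).

Definition direct g j w : R := if g j w then b 1 - c else 0.

Definition indirect g j w : R :=
  if connect g j w && (1 < dist g j w)%N then b (dist g j w) else 0.

Definition toll g j w : R :=
  if [exists x, essential g x j w] then gamma * b (dist g j w) else 0.

Definition net_indirect g j w : R := indirect g j w - toll g j w.

Definition pair_payoff g j w : R := direct g j w + net_indirect g j w.

Definition rent_share g y z : R :=
  gamma / (ness g y z)%:R * 2%:R * b (dist g y z).

Definition rent g i : R :=
  \sum_(y : 'I_n) \sum_(z : 'I_n)
    (if (y < z)%N && essential g i y z then rent_share g y z else 0).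

Lemma utilE g i : util b c gamma g i = \sum_w pair_payoff g i w + rent g i.
Proof.
rewrite /util /rent; congr (_ + _); last by apply: eq_bigr => y _; rewrite big_mkcond.
rewrite /pair_payoff /net_indirect big_split /= sumrB addrA.
congr (_ + _ - _); first by rewrite /deg mulr_natl -sumr_const big_mkcond.
all: by rewrite big_mkcond.
Qed.

(* The welfare counts, for every ordered pair, the link and indirect
   benefits only (tolls and rents are transfers). *)
Definition pair_welfare g j w : R := direct g j w + indirect g j w.

Lemma welfareE g : welfare b c g = \sum_j \sum_w pair_welfare g j w.
Proof.
apply: eq_bigr => j _; rewrite /pair_welfare big_split /=; congr (_ + _).
  by rewrite /deg mulr_natl -sumr_const big_mkcond.
by rewrite big_mkcond.
Qed.

Lemma indirect_ge0 g j w : 0 <= indirect g j w.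
Proof.
by rewrite /indirect; case: ifP => // /andP[_ hd]; apply/ltW/b_pos/ltnW.
Qed.

Lemma indirect_le_b2 g j w : indirect g j w <= b 2.
Proof.
rewrite /indirect; case: ifP => [/andP[_ hd]|_]; first exact: b_anti hd.
exact/ltW/b_pos.
Qed.

Lemma indirect_adj g j w : g j w -> indirect g j w = 0.
Proof. by move=> h; rewrite /indirect ltnNge (dist_le (_ : walk_k g j w 1)) ?walk1 ?andbF. Qed.

Lemma indirect_self g j : indirect g j j = 0.
Proof. by rewrite /indirect dist_self andbF. Qed.

Lemma indirect_nconn g j w : ~~ connect g j w -> indirect g j w = 0.
Proof. by move=> h; rewrite /indirect (negbTE h). Qed.

Lemma net_toll g j w : [exists x, essential g x j w] ->
  net_indirect g j w = (1 - gamma) * b (dist g j w).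
Proof.
move=> hQ; case/existsP: (hQ) => x he.
by rewrite /net_indirect /toll /indirect hQ (ess_conn he) (ess_dist he) /=; ring.
Qed.

Lemma net_notoll g j w : ~~ [exists x, essential g x j w] ->
  net_indirect g j w = indirect g j w.
Proof. by move=> hQ; rewrite /net_indirect /toll (negbTE hQ) subr0. Qed.

Lemma net_zero g j w : indirect g j w = 0 -> net_indirect g j w = 0.
Proof.
move=> h0; rewrite net_notoll ?h0 //; apply/existsP => -[x he].
move: h0; rewrite /indirect (ess_conn he) (ess_dist he) /= => h0.
by have := b_pos (ltnW (ess_dist he)); rewrite h0 ltxx.
Qed.

Lemma net_ge0 g j w : 0 <= net_indirect g j w.
Proof.
case hQ: [exists x, essential g x j w]; last by rewrite net_notoll ?hQ ?indirect_ge0.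
rewrite net_toll //; case/existsP: hQ => x /ess_dist hd.
by apply: mulr_ge0 one_sub_gamma_ge0 _; apply/ltW/b_pos/ltnW.
Qed.

Lemma net_le_b2 g j w : net_indirect g j w <= b 2.
Proof.
case hQ: [exists x, essential g x j w]; last by rewrite net_notoll ?hQ ?indirect_le_b2.
rewrite net_toll //; case/existsP: hQ => x /ess_dist hd.
have h1 := b_anti (isT : (0 < 2)%N) hd.
have h2 : 0 < b (dist g j w) by apply/b_pos/ltnW.
have := mulr_ge0 hg0 (ltW h2); rewrite mulrBl mul1r; lra.
Qed.

Lemma pair_adj g j w : g j w -> pair_payoff g j w = b 1 - c.
Proof. by move=> h; rewrite /pair_payoff /direct h net_zero ?indirect_adj ?addr0. Qed.

Lemma pair_nadj g j w : ~~ g j w -> pair_payoff g j w = net_indirect g j w.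
Proof. by move=> h; rewrite /pair_payoff /direct (negbTE h) add0r. Qed.

Lemma pair_self g j : ~~ g j j -> pair_payoff g j j = 0.
Proof. by move=> h; rewrite pair_nadj // net_zero ?indirect_self. Qed.

Lemma rent_share_ge0 g x y z : essential g x y z -> 0 <= rent_share g y z.
Proof.
move=> he; rewrite /rent_share; have hd := dist_pos (ess_conn he) (ess_neq he).
by apply: mulr_ge0; [apply/mulr_ge0/ler0n/divr_ge0 | apply/ltW/b_pos].
Qed.

End Decomposition.

Section AddingLinks.
Variable n : nat.
Implicit Types (g h : rel 'I_n) (x y z u v w i j : 'I_n).

(* Adding links never lowers the net indirect benefit i draws from a node w
   it is still not adjacent to: distances shrink and tolls can only vanish. *)
Lemma net_mono g h i w : subrel g h -> ~~ h i w ->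
  net_indirect g i w <= net_indirect h i w.
Proof.
move=> sub hn; case hP: (connect g i w && (1 < dist g i w)%N); last first.
  by rewrite net_zero ?net_ge0 // /indirect hP.
case/andP: hP => hc hd.
have hc' : connect h i w := connect_mono sub hc.
have hd' : (2 <= dist h i w)%N.
  apply: dist_ge => //; case=> [_|[_|//]]; last by rewrite walk1.
  by rewrite walk0; apply: contraTneq hd => ->; rewrite dist_self.
have hbb : b (dist g i w) <= b (dist h i w).
  by apply: b_anti (dist_mono sub hc); apply: leq_trans hd'.
have hb0 : 0 < b (dist g i w) by apply/b_pos/ltnW.
case hQ': [exists x, essential h x i w].
  have hQ : [exists x, essential g x i w].
    by case/existsP: hQ' => x hx; apply/existsP; exists x; apply: ess_mono hx.
  by rewrite !net_toll //; apply: ler_wpM2l => //; apply: one_sub_gamma_ge0.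
rewrite (net_notoll (negbT hQ')) /net_indirect /toll /indirect hc hd hc' hd' /=.
have := mulr_ge0 hg0 (ltW hb0); case: ifP => _; lra.
Qed.

Lemma pair_payoff_mono g h i w : subrel g h -> h i w = g i w ->
  pair_payoff g i w <= pair_payoff h i w.
Proof.
move=> sub hiw; case hg: (g i w); first by rewrite !pair_adj ?hiw.
by rewrite !pair_nadj ?hiw ?hg //; apply: net_mono; rewrite ?hiw ?hg.
Qed.

(* If all new links are incident to i, every pair for which i was essential
   keeps i essential, with fewer co-intermediaries and a shorter distance:
   i's rent does not decrease. *)
Lemma rent_mono g h i : subrel g h -> (forall u v, avoid h i u v = avoid g i u v) ->
  rent g i <= rent h i.
Proof.
move=> sub hav; apply: ler_sum => y _; apply: ler_sum => z _.
case hE: ((y < z)%N && essential g i y z); last first.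
  by case: ifP => // /andP[_ he]; apply: rent_share_ge0 he.
case/andP: hE => hyz he.
have hc := ess_conn he.
have he' : essential h i y z.
  case/and4P: (he) => h1 h2 h3 h4; apply/and4P; split => //.
    exact: connect_mono sub h3.
  by rewrite (eq_connect hav).
rewrite hyz he' /= /rent_share.
have hd1 := dist_pos hc (ess_neq he).
have hbb : b (dist g y z) <= b (dist h y z).
  by apply: b_anti (dist_mono sub hc); apply: dist_pos (connect_mono sub hc) (ess_neq he).
have hinv : (ness g y z)%:R^-1 <= (ness h y z)%:R^-1 :> R.
  have he1 := ness_pos he'; have hee := ness_mono sub hc.
  by rewrite lef_pV2 ?posrE ?ltr0n ?ler_nat // (leq_trans he1).
apply: ler_pM hbb; last by apply: ler_wpM2r => //; apply: ler_wpM2l.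
- by apply/mulr_ge0/ler0n/divr_ge0.
- exact: ltW (b_pos hd1).
Qed.

Lemma add_gain g g' i j : i != j ->
  (forall u v, g' u v = [|| g u v, (u == i) && (v == j) | (u == j) && (v == i)]) ->
  util b c gamma g i + ((b 1 - c) - pair_payoff g i j) <= util b c gamma g' i.
Proof.
move=> hij hg'.
have sub : subrel g g' by move=> u v huv; rewrite hg' huv.
have hpsi' : pair_payoff g' i j = b 1 - c by rewrite pair_adj // hg' !eqxx orbT.
have hS : \sum_(w | w != j) pair_payoff g i w <= \sum_(w | w != j) pair_payoff g' i w.
  apply: ler_sum => w hw; apply: pair_payoff_mono => //.
  by rewrite hg' eqxx (negbTE hw) (negbTE hij) /= !orbF.
have hR : rent g i <= rent g' i.
  apply: rent_mono => // u v; rewrite /avoid hg'.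
  case: (eqVneq u i) => [->|hu]; first by rewrite !andbF.
  case: (eqVneq v i) => [->|hv]; first by rewrite !andbF.
  by rewrite !andbF /= !orbF.
rewrite !utilE (bigD1 j) //= [X in _ <= X + _](bigD1 j) //= hpsi'; lra.
Qed.

Lemma bridge_stable g i j : c < b 1 -> (forall u v, g u v = g v u) -> g i j ->
  ~~ connect (dell g i j) i j ->
  util b c gamma (dell g i j) i <= util b c gamma g i /\
  util b c gamma (dell g i j) j <= util b c gamma g j.
Proof.
move=> hc hsym hij hnc; set h := dell g i j.
have hne : i != j by apply: contraNneq hnc => ->; apply: connect0.
have hhsym u v : h u v = h v u.
  by rewrite /h /dell hsym; case: (u == i); case: (u == j); case: (v == i); case: (v == j).
have hspec u v : g u v = [|| h u v, (u == i) && (v == j) | (u == j) && (v == i)].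
  rewrite /h /dell; case: (boolP ((u == i) && (v == j) || (u == j) && (v == i))) => [|hp].
    by rewrite orbT; case/orP=> /andP[/eqP-> /eqP->]; rewrite // hsym.
  by rewrite andbT orbF.
have hnij : ~~ h i j by rewrite /h /dell !eqxx andbF.
have loss k l : k != l -> ~~ h k l -> ~~ connect h k l ->
    (forall u v, g u v = [|| h u v, (u == k) && (v == l) | (u == l) && (v == k)]) ->
    util b c gamma h k <= util b c gamma g k.
  move=> hkl hn hnkl hs; have := add_gain hkl hs.
  by rewrite pair_nadj // net_zero ?indirect_nconn //; lra.
split; first exact: loss hne hnij hnc hspec.
apply: (loss j i).
- by rewrite eq_sym.
- by rewrite (hhsym j i).
- by rewrite (sym_connect_sym hhsym).
- by move=> u v; rewrite hspec [X in _ || X]orbC.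
Qed.

End AddingLinks.

Section LowCost.
Variable n : nat.
Implicit Types (g : rel 'I_n) (i j w : 'I_n).

Lemma pair_payoff_le_link g i w : b 2 < b 1 - c -> pair_payoff g i w <= b 1 - c.
Proof.
move=> hlow.
case: (boolP (g i w)) => hg; first by rewrite pair_adj.
rewrite pair_nadj ?hg //; have := net_le_b2 g i w; lra.
Qed.

Lemma pair_welfare_le_link g j w : b 2 < b 1 - c -> ~~ g j j ->
  pair_welfare g j w <= if j == w then 0 else b 1 - c.
Proof.
move=> hlow hirr; rewrite /pair_welfare /direct.
case: eqVneq => [<-|_]; first by rewrite (negbTE hirr) indirect_self addr0.
case hg: (g j w); first by rewrite indirect_adj // addr0.
by have := indirect_le_b2 g j w; lra.
Qed.

(* Pairwise stability forces completeness: both endpoints of a missing link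
   would strictly gain by adding it. *)
Lemma stable_complete g : b 2 < b 1 - c -> pairwise_stable b c gamma g ->
  forall i j, i != j -> g i j.
Proof.
move=> hlow [_ hps] i j hij; apply/negPn/negP => hnij.
have hji : j != i by rewrite eq_sym.
have gain_i := add_gain (g := g) (g' := addl g i j) hij (fun _ _ => erefl).
have gain_j := add_gain (g := g) (g' := addl g i j) hji (fun u v => congr1 (orb _) (orbC _ _)).
have := pair_payoff_le_link g j i hlow; have := net_le_b2 g i j.
rewrite pair_nadj // in gain_i; have := hps i j hij hnij; lra.
Qed.

Lemma complete_efficient g : b 2 < b 1 - c -> (forall i j, i != j -> g i j) ->
  efficient b c g.
Proof.
move=> hlow hc g' [_ hirr]; rewrite !welfareE; apply: ler_sum => j _; apply: ler_sum => w _.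
apply: le_trans (pair_welfare_le_link w hlow _) _; first by rewrite hirr.
rewrite /pair_welfare /direct; have := indirect_ge0 g j w; have := b_pos (isT : (0 < 2)%N).
case: eqVneq => [_|/hc ->]; last by lra.
by case: (g j w) => /=; lra.
Qed.

End LowCost.

Section StarStability.
Variables (n : nat) (g : rel 'I_n) (ctr : 'I_n).
Hypothesis hst : isstar g ctr.
Implicit Types (x y z u v w i j l : 'I_n).

Lemma star_pair_ctr w : pair_payoff g ctr w = if w == ctr then 0 else b 1 - c.
Proof.
case: (eqVneq w ctr) => [->|hw]; first by rewrite pair_self ?(star_irr hst).
by rewrite pair_adj // hst eqxx eq_sym hw.
Qed.

Lemma star_pair_leaf l w : l != ctr -> pair_payoff g l w =
  if w == l then 0 else if w == ctr then b 1 - c else (1 - gamma) * b 2.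
Proof.
move=> hl; case: (eqVneq w l) => [->|hwl]; first by rewrite pair_self ?(star_irr hst).
case: (eqVneq w ctr) => [->|hwc]; first by rewrite pair_adj // hst hl eqxx orbT.
have hn : ~~ g l w by rewrite hst (negbTE hl) (negbTE hwc) andbF.
rewrite pair_nadj // net_toll; last first.
  by apply/existsP; exists ctr; rewrite (star_ess hst) eqxx hl hwc eq_sym hwl.
by rewrite (star_dist hst) (negbTE hl) (negbTE hwc) eq_sym (negbTE hwl).
Qed.

Lemma star_rent_leaf l : l != ctr -> rent g l = 0.
Proof.
move=> hl; apply: big1 => y _; apply: big1 => z _.
by rewrite (star_ess hst) (negbTE hl) andbF.
Qed.

Lemma star_rent_ctr : rent g ctr = \sum_(y : 'I_n) \sum_(z : 'I_n)
  (if (y < z)%N && [&& y != ctr, z != ctr & y != z] then gamma * 2%:R * b 2 else 0).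
Proof.
apply: eq_bigr => y _; apply: eq_bigr => z _.
rewrite (star_ess hst) eqxx /=; case: ifP => // /andP[_ hc].
rewrite /rent_share (star_ness hst) hc (star_dist hst).
case/and3P: hc => hy hz hyz.
by rewrite (negbTE hy) (negbTE hz) (negbTE hyz) /= divr1.
Qed.

(* Every link of a star is a bridge: its leaf endpoint becomes isolated. *)
Lemma star_link_bridge i j : g i j -> ~~ connect (dell g i j) i j.
Proof.
move=> hij; have hne : i != j by apply: contraTneq hij => ->; rewrite (star_irr hst).
have hji : j != i by rewrite eq_sym.
move: (hij); rewrite hst hne /= => /orP[/eqP hic | /eqP hjc].
  have iso v : ~~ dell g i j j v.
    rewrite /dell hst hic eqxx -hic (negbTE hji).
    by case: (v == i); rewrite /= ?andbF ?andbT.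
  rewrite (sym_connect_sym (e := dell g i j)); last first.
    move=> u v; rewrite /dell (star_sym hst u v).
    by case: (u == i); case: (u == j); case: (v == i); case: (v == j).
  by apply/negP => /(connect_stuck iso) hij'; rewrite hij' eqxx in hji.
have iso v : ~~ dell g i j i v.
  rewrite /dell hst hjc eqxx -hjc (negbTE hne).
  by case: (v == j); rewrite /= ?andbF ?andbT.
by apply/negP => /(connect_stuck iso) hji'; rewrite hji' eqxx in hne.
Qed.

(* After linking two leaves i and j, the centre is still essential between i
   and any third leaf: avoiding the centre, i only reaches j. *)
Lemma addl_leaves_ess i j w : i != ctr -> j != ctr ->
  w != i -> w != j -> w != ctr -> essential (addl g i j) ctr i w.
Proof.
move=> hic hjc hwi hwj hwc.
have sub : subrel g (addl g i j) by move=> u v h; rewrite /addl h.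
apply/and4P; split; rewrite 1?eq_sym ?(connect_mono sub (star_conn hst i w)) //.
apply/negP => hcn.
have : (w == i) || (w == j).
  apply: (@connect_closedP _ _ (fun x => (x == i) || (x == j)) i w _ _ hcn);
    last by rewrite eqxx.
  move=> u v _ /and3P[]; rewrite /addl hst => huv hu hv.
  move: huv; rewrite (negbTE hu) (negbTE hv) /= andbF /=.
  by case/orP => /andP[_ ->]; rewrite ?orbT.
by rewrite (negbTE hwi) (negbTE hwj).
Qed.

(* A leaf never gains by linking to another leaf when b1 - c <= (1-gamma) b2:
   it trades the value (1 - gamma) b2 for b1 - c and collects no rent. *)
Lemma star_leaf_no_gain i j : i != j -> i != ctr -> j != ctr ->
  b 1 - c <= (1 - gamma) * b 2 ->
  util b c gamma (addl g i j) i <= util b c gamma g i.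
Proof.
move=> hij hic hjc hbc; set g' := addl g i j.
have sub : subrel g g' by move=> u v h; rewrite /g' /addl h.
rewrite !utilE (star_rent_leaf hic); apply: lerD; last first.
  apply: sumr_le0 => y _; apply: sumr_le0 => z _; case: ifP => // /andP[_ he].
  exfalso; move: he; apply/negP; apply: (@not_ess_hub _ g' i ctr) => // u hui huc.
  by apply/andP; split; apply: sub; rewrite hst eqxx ?orbT ?andbT // eq_sym.
apply: ler_sum => w _; rewrite (star_pair_leaf _ hic).
case: (eqVneq w i) => [->|hwi].
  by rewrite pair_self // /g' /addl (star_irr hst) eqxx (negbTE hij).
case: (eqVneq w ctr) => [->|hwc].
  by rewrite pair_adj // sub // hst hic eqxx orbT.
case: (eqVneq w j) => [->|hwj]; first by rewrite pair_adj // /g' /addl !eqxx orbT.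
have hn : ~~ g' i w.
  rewrite /g' /addl hst (negbTE hic) (negbTE hwc) eqxx (negbTE hwj) (negbTE hij).
  by rewrite /= andbF.
have he := addl_leaves_ess hic hjc hwi hwj hwc.
rewrite pair_nadj // net_toll; last by apply/existsP; exists ctr.
by apply: ler_wpM2l (b_anti _ (ess_dist he)); rewrite ?one_sub_gamma_ge0.
Qed.

Lemma star_stable : b 1 - c <= (1 - gamma) * b 2 -> c < b 1 ->
  pairwise_stable b c gamma g.
Proof.
move=> hbc hc; split=> [i j hij | i j hij hnij hlt].
  exact: bridge_stable hc (star_sym hst) hij (star_link_bridge hij).
exfalso; move: hlt; apply/negP; rewrite -leNgt.
have /norP[hic hjc] : ~~ ((i == ctr) || (j == ctr)) by move: hnij; rewrite hst hij.
exact: star_leaf_no_gain.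
Qed.

End StarStability.

Section EntryIntoStar.
Variables (n : nat) (g : rel 'I_n) (ctr : 'I_n).
Hypothesis hst : isstar g ctr.
Implicit Types (a t : 'I_n).

Notation wid := (widen_ord (leqnSn n)).

Lemma deg_sum (h : rel 'I_n) x : (deg h x)%:R = \sum_v (if h x v then 1 else 0) :> R.
Proof. by rewrite /deg -sum1_card natr_sum big_mkcond. Qed.

(* The centre accepts a newcomer: its links only increase and it becomes
   essential for more pairs of leaves. *)
Lemma star_accepts : c < b 1 -> accepts b c gamma g ctr.
Proof.
move=> hc; have hst' := ext_star hst.
rewrite /accepts !utilE; apply: lerD.
  rewrite [X in _ <= X]big_ord_recr /= (star_pair_ctr hst') eq_sym wid_neqN.
  under [X in _ <= X + _]eq_bigr => w _ do rewrite (star_pair_ctr hst') wid_eq.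
  under eq_bigr => w _ do rewrite (star_pair_ctr hst).
  by rewrite lerDl; lra.
rewrite (star_rent_ctr hst) (star_rent_ctr hst') [X in _ <= X]big_ord_recr /=.
have hT : 0 <= gamma * 2%:R * b 2.
  by apply: mulr_ge0; [apply: mulr_ge0 | apply/ltW/b_pos].
rewrite -[X in X <= _]addr0; apply: lerD; last by apply: sumr_ge0 => z _; case: ifP.
apply: ler_sum => y _; rewrite [X in _ <= X]big_ord_recr /=.
rewrite -[X in X <= _]addr0; apply: lerD; last by case: ifP.
by apply: ler_sum => z _; rewrite !wid_eq.
Qed.

Lemma entrant_util_centre c0 : entrant_util b c gamma c0 g ctr =
  \sum_a ((if a == ctr then b 1 - c else (1 - gamma) * b 2)
          - c0 * (if g ctr a then 1 else 0)).
Proof.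
have hst' := ext_star hst; have hN : ord_max != wid ctr by rewrite eq_sym wid_neqN.
rewrite /entrant_util utilE (star_rent_leaf hst' hN) addr0 big_ord_recr /=.
rewrite (star_pair_leaf hst' _ hN) eqxx addr0 deg_sum mulr_sumr -sumrB.
by apply: eq_bigr => a _; rewrite (star_pair_leaf hst' _ hN) wid_neqN wid_eq.
Qed.

(* A newcomer linked to a leaf t is a leaf of a tree in which t is essential
   for all its pairs; it collects no rent. *)
Lemma ext_leaf_rent t : t != ctr -> rent (ext g t) ord_max = 0.
Proof.
move=> htc; apply: big1 => y _; apply: big1 => z _; case: ifP => // /andP[_ he].
exfalso; move: he; apply/negP.
apply: (@not_ess_hub _ (ext g t) ord_max (wid ctr)); first by rewrite eq_sym wid_neqN.
move=> u huN huc; case: (ordS_case u) => [hu|[a hu]]; first by rewrite hu eqxx in huN.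
rewrite hu !ext_ww !hst eqxx !orbT andbT; rewrite hu wid_eq in huc.
by rewrite huc eq_sym huc.
Qed.

Lemma ext_leaf_ess t a : t != ctr -> a != t ->
  essential (ext g t) (wid t) ord_max (wid a).
Proof.
move=> htc hat; apply/and4P; split; rewrite ?wid_neqN ?wid_eq 1?eq_sym //.
  apply: (@connect_trans _ _ (wid t)); first by apply: connect1; rewrite ext_Nw eqxx.
  have hct : ext g t (wid t) (wid ctr) by rewrite ext_ww hst htc eqxx orbT.
  case: (eqVneq a ctr) => [->|hac]; first exact: connect1.
  apply: (connect_trans (connect1 hct)); apply: connect1.
  by rewrite ext_ww hst eqxx eq_sym hac.
have hstuck v : ~~ avoid (ext g t) (wid t) ord_max v.
  rewrite /avoid; case: (ordS_case v) => [->|[a' ->]]; first by rewrite ext_NN.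
  by rewrite ext_Nw wid_eq; case: (eqVneq a' t); rewrite ?andbF.
by apply/negP => /(connect_stuck hstuck) /eqP; rewrite wid_neqN.
Qed.

Lemma ext_leaf_dist t a : t != ctr -> a != t -> a != ctr ->
  (3 <= dist (ext g t) ord_max (wid a))%N.
Proof.
move=> htc hat hac; apply: dist_ge; first exact: ess_conn (ext_leaf_ess htc hat).
case=> [_|[_|[_|//]]]; first by rewrite walk0 eq_sym wid_neqN.
  by rewrite walk1 ext_Nw (negbTE hat).
rewrite walk2; apply/existsP => -[x /andP[]].
case: (ordS_case x) => [->|[a' ->]]; first by rewrite ext_NN.
rewrite ext_Nw ext_ww => /eqP ->; rewrite hst (negbTE htc) (negbTE hac).
by rewrite andbF.
Qed.

Lemma entrant_leaf_le t : t != ctr -> util b c gamma (ext g t) ord_max <=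
  \sum_a (if a == t then b 1 - c else if a == ctr then (1 - gamma) * b 2
          else (1 - gamma) * b 3).
Proof.
move=> htc; rewrite utilE ext_leaf_rent // addr0 big_ord_recr /=.
rewrite pair_self ?ext_NN // addr0; apply: ler_sum => a _.
case: (eqVneq a t) => [->|hat]; first by rewrite pair_adj // ext_Nw eqxx.
have he := ext_leaf_ess htc hat.
rewrite pair_nadj ?ext_Nw ?(negbTE hat) // net_toll; last first.
  by apply/existsP; exists (wid t).
case: (eqVneq a ctr) => [_|hac].
  by apply: ler_wpM2l (b_anti _ (ess_dist he)); rewrite ?one_sub_gamma_ge0.
by apply: ler_wpM2l (b_anti _ (ext_leaf_dist htc hat hac)); rewrite ?one_sub_gamma_ge0.
Qed.

(* With at least three nodes and c0 < (1 - gamma)(b2 - b3), a newcomer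
   strictly prefers the centre to any leaf t: it gains (1 - gamma)(b2 - b3)
   on each other leaf and pays c0 only for the extra links of the centre. *)
Lemma centre_beats_leaf c0 t : t != ctr -> (exists v, (v != ctr) && (v != t)) ->
  c0 < (1 - gamma) * (b 2 - b 3) ->
  entrant_util b c gamma c0 g t < entrant_util b c gamma c0 g ctr.
Proof.
move=> htc [v0 /andP[hv0c hv0t]] hc0; rewrite (entrant_util_centre c0).
pose U a := (if a == t then b 1 - c else if a == ctr then (1 - gamma) * b 2
               else (1 - gamma) * b 3) - c0 * (if g t a then 1 else 0).
have hleaf : entrant_util b c gamma c0 g t <= \sum_a U a.
  rewrite /entrant_util /U deg_sum mulr_sumr sumrB.
  by have := entrant_leaf_le htc; lra.
apply: (le_lt_trans hleaf); rewrite -subr_gt0 -sumrB.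
pose D a := ((if a == ctr then b 1 - c else (1 - gamma) * b 2)
                - c0 * (if g ctr a then 1 else 0)) - U a.
have hctn : ctr != t by rewrite eq_sym.
have hDct : D ctr + D t = 0.
  by rewrite /D /U !hst !eqxx (negbTE htc) (negbTE hctn) /=; lra.
have hDo a : a != ctr -> a != t -> D a = (1 - gamma) * (b 2 - b 3) - c0.
  move=> hac hat; rewrite /D /U !hst (negbTE hac) (negbTE hat) (negbTE htc) eqxx /=.
  by rewrite eq_sym hac eq_sym hat /=; lra.
rewrite (bigD1 ctr) //= (bigD1 t) /=; last by rewrite htc.
rewrite (bigD1 v0) /=; last by rewrite hv0c hv0t.
have hrest : 0 <= \sum_(i | ((i != ctr) && (i != t)) && (i != v0)) D i.
  by apply: sumr_ge0 => a /andP[/andP[hac hat] _]; rewrite hDo //; lra.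
change (0 < D ctr + (D t + (D v0 +
  \sum_(i | (i != ctr) && (i != t) && (i != v0)) D i))).
have := hDo v0 hv0c hv0t; lra.
Qed.

End EntryIntoStar.

Section StarEfficiency.
Variable n : nat.
Implicit Types (g : rel 'I_n) (ctr : 'I_n) (p : 'I_n * 'I_n).

(* Ordered pairs of distinct nodes that are adjacent or disconnected: these
   get b1 - c or 0 instead of the maximal value b2. *)
Definition loose_pairs g : {set 'I_n * 'I_n} :=
  [set p | (p.1 != p.2) && (g p.1 p.2 || ~~ connect g p.1 p.2)].

Definition pair_cap p : R := if p.1 == p.2 then 0 else b 2.

Lemma loose_sum g (x : R) :
  x *+ #|loose_pairs g| = \sum_p (if p \in loose_pairs g then x else 0).
Proof. by rewrite -big_mkcond sumr_const. Qed.

Lemma welfare_le_loose g : c <= b 1 -> b 1 - c <= b 2 -> (forall j, ~~ g j j) ->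
  welfare b c g <= \sum_p pair_cap p - (b 2 - (b 1 - c)) *+ #|loose_pairs g|.
Proof.
move=> hc hbc hirr; rewrite welfareE pair_big /= loose_sum -sumrB.
apply: ler_sum => -[j w] _; rewrite /pair_cap /pair_welfare /direct inE /=.
case: (eqVneq j w) => [<-|hjw] /=.
  by rewrite (negbTE (hirr j)) indirect_self !subr0 addr0.
case hg: (g j w) => /=; first by rewrite indirect_adj // addr0; lra.
case hcn: (connect g j w) => /=; last by rewrite indirect_nconn ?hcn //; lra.
by rewrite subr0 add0r indirect_le_b2.
Qed.

Lemma welfare_diam2 g : (forall j, ~~ g j j) ->
  (forall j w, j != w -> ~~ g j w -> connect g j w && (dist g j w == 2)) ->
  welfare b c g = \sum_p pair_cap p - (b 2 - (b 1 - c)) *+ #|loose_pairs g|.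
Proof.
move=> hirr hd2; rewrite welfareE pair_big /= loose_sum -sumrB.
apply: eq_bigr => -[j w] _; rewrite /pair_cap /pair_welfare /direct inE /=.
case: (eqVneq j w) => [<-|hjw] /=.
  by rewrite (negbTE (hirr j)) indirect_self !subr0 addr0.
case hg: (g j w) => /=; first by rewrite indirect_adj // addr0; lra.
have /andP[hc /eqP hd] := hd2 j w hjw (negbT hg).
by rewrite /indirect hc hd /= subr0 add0r.
Qed.

(* Every symmetric irreflexive network has at least 2 (n - 1) loose pairs:
   for w != ctr, take (par w, w) and (w, par w) with the BFS parent if w is
   connected to ctr, and (ctr, w), (w, ctr) otherwise. *)
Lemma loose_pairs_lower g ctr : (forall u v, g u v = g v u) -> (forall j, ~~ g j j) ->
  (#|[set w | w != ctr]| + #|[set w | w != ctr]| <= #|loose_pairs g|)%N.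
Proof.
move=> hsym hirr; set A := [set w | w != ctr].
pose F1 w := if connect g ctr w then (par g ctr w, w) else (ctr, w).
pose F2 w := if connect g ctr w then (w, par g ctr w) else (w, ctr).
have inj1 : injective F1 by move=> w w' /(congr1 snd); rewrite /F1; case: ifP; case: ifP.
have inj2 : injective F2 by move=> w w' /(congr1 fst); rewrite /F2; case: ifP; case: ifP.
have hcs w : connect g w ctr = connect g ctr w by rewrite (sym_connect_sym hsym).
have hsub : F1 @: A :|: F2 @: A \subset loose_pairs g.
  apply/subsetP => p; rewrite inE => /orP[] /imsetP[w]; rewrite inE => hw ->;
    rewrite inE /F1 /F2; case: ifP => hcw /=.
  - case/andP: (parP hcw hw) => hpw _; rewrite hpw /= andbT.
    by apply: contraTneq hpw => ->; rewrite (negbTE (hirr w)).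
  - by rewrite hcw orbT andbT eq_sym.
  - case/andP: (parP hcw hw) => hpw _; rewrite hsym hpw /= andbT.
    by apply: contraTneq hpw => <-; rewrite (negbTE (hirr w)).
  - by rewrite hcs hcw orbT andbT.
have hI : F1 @: A :&: F2 @: A = set0.
  apply/setP => p; rewrite in_setI in_set0.
  apply/negP => /andP[/imsetP[w hw ->] /imsetP[w' hw' e]].
  rewrite !inE in hw hw'; move: e; rewrite /F1 /F2.
  case: ifP => hcw; case: ifP => hcw' [e1 e2].
  - case/andP: (parP hcw hw) => _; rewrite e1 => hh1.
    case/andP: (parP hcw' hw') => _; rewrite -e2 => hh2.
    by move: (ltn_trans hh1 hh2); rewrite ltnn.
  - by move: hw; rewrite e2 eqxx.
  - by move: hw'; rewrite -e1 eqxx.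
  - by move: hw'; rewrite -e1 eqxx.
rewrite -{1}(card_imset A inj1) -(card_imset A inj2).
by apply: leq_trans (subset_leq_card hsub); rewrite cardsU hI cards0 subn0.
Qed.

Lemma star_loose_pairs g ctr : isstar g ctr ->
  (#|loose_pairs g| <= #|[set w | w != ctr]| + #|[set w | w != ctr]|)%N.
Proof.
move=> hst; set A := [set w | w != ctr].
have hss : loose_pairs g \subset [set (ctr, w) | w in A] :|: [set (w, ctr) | w in A].
  apply/subsetP => -[j w]; rewrite !inE /= (star_conn hst) orbF hst.
  case/andP => hjw /andP[_ /orP[/eqP hj|/eqP hw]]; apply/orP.
    by left; apply/imsetP; exists w; rewrite ?inE -?hj 1?eq_sym.
  by right; apply/imsetP; exists j; rewrite ?inE -?hw.
apply: (leq_trans (subset_leq_card hss)); rewrite cardsU.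
by apply: leq_trans (leq_subr _ _) _; apply: leq_add; apply: leq_imset_card.
Qed.

(* For 0 <= b1 - c <= b2 the star is efficient: it has diameter 2 and the
   fewest loose pairs. *)
Lemma star_efficient g ctr : isstar g ctr -> c <= b 1 -> b 1 - c <= b 2 ->
  efficient b c g.
Proof.
move=> hst hc hbc g' [hsym hirr].
have hirr' j : ~~ g' j j by rewrite hirr.
have hdl : 0 <= b 2 - (b 1 - c) by rewrite subr_ge0.
have hd2 j w : j != w -> ~~ g j w -> connect g j w && (dist g j w == 2).
  move=> hjw; rewrite hst hjw (star_conn hst) (star_dist hst) (negbTE hjw) /=.
  by move/negbTE ->.
rewrite (welfare_diam2 (fun j => negbT (star_irr hst j)) hd2).
apply: le_trans (welfare_le_loose hc hbc hirr') _; apply: lerB => //.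
rewrite -!(mulr_natr (b 2 - (b 1 - c))) ler_wpM2l // ler_nat.
exact: leq_trans (star_loose_pairs hst) (loose_pairs_lower ctr hsym hirr').
Qed.

End StarEfficiency.

Section Process.
Variable c0 : R.

Lemma single_node_efficient (g : rel 'I_1) : ~~ g ord0 ord0 -> efficient b c g.
Proof.
move=> hg g' [_ hirr]; rewrite !welfareE; apply: ler_sum => j _; apply: ler_sum => w _.
by rewrite /pair_welfare /direct (ord1 w) (ord1 j) hirr (negbTE hg) !indirect_self.
Qed.

(* If c > b1 nobody ever enters: the first newcomer would get b1 - c < 0,
   and the empty one-node network is pairwise stable, so nobody moves. *)
Lemma visited_high_cost n (g : rel 'I_n) : b 1 < c -> visited b c gamma c0 g ->
  n = 1%N /\ forall u v, g u v = false.
Proof.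
move=> hc; elim=> [|m g0 t _ [hm hg] _ [_ hpos _] | m g0 g1 _ [hm hg] hnps _] //.
- exfalso; subst m.
  have hst : isstar g0 t by move=> u v; rewrite hg (ord1 u) (ord1 v) eqxx.
  move: hpos; rewrite (entrant_util_centre hst) big_ord1 (ord1 t) eqxx hg; lra.
- exfalso; subst m; apply: hnps; split=> [i j|i j]; first by rewrite hg.
  by rewrite (ord1 i) (ord1 j) eqxx.
Qed.

(* In the regime of part 2 every visited network is a star: stars are
   pairwise stable, and a newcomer links to the centre (on at most two
   nodes any node is a centre; with more nodes the centre beats every leaf). *)
Lemma visited_star n (g : rel 'I_n) :
  b 1 - c <= (1 - gamma) * b 2 -> c < b 1 -> c0 < (1 - gamma) * (b 2 - b 3) ->
  visited b c gamma c0 g -> exists ctr, isstar g ctr.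
Proof.
move=> hbc hc hc0; elim=> [|m g0 t _ [ctr hst] _ [_ _ hbest] | m g0 g1 _ [ctr hst] hnps _].
- by exists ord0 => u v; rewrite (ord1 u) (ord1 v) eqxx.
- suff hst' : isstar g0 t by exists (widen_ord (leqnSn m) t); exact: ext_star.
  case: (ltnP 2 m) => hm; last exact: star_small_centre hm hst.
  case: (eqVneq t ctr) => [->//|htc].
  have := centre_beats_leaf hst htc (exists_third ctr t hm) hc0.
  by move/lt_le_trans/(_ (hbest ctr (star_accepts hst hc))); rewrite ltxx.
- by exfalso; apply/hnps/star_stable.
Qed.

End Process.
End Payoffs.

Theorem theorem6 (R : realFieldType) (b : nat -> R) (c gamma c0 : R)
  (hb : forall k : nat, (0 < k)%N -> 0 < b k.+1 /\ b k.+1 < b k)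
  (hg0 : 0 <= gamma) (hg1 : gamma < 1) :
  (* 1. *)
  (b 1%N < c ->
     forall n (g : rel 'I_n), visited b c gamma c0 g ->
       n = 1%N /\ efficient b c g) /\
  (* 2. *)
  (b 1%N - b 2%N + gamma * b 2%N <= c -> c < b 1%N ->
   c0 < (1 - gamma) * (b 2%N - b 3%N) ->
     forall n (g : rel 'I_n), visited b c gamma c0 g ->
       pairwise_stable b c gamma g -> efficient b c g) /\
  (* 3. *)
  (c < b 1%N - b 2%N -> c0 <= (1 - gamma) * b 2%N ->
     forall n (g : rel 'I_n), visited b c gamma c0 g ->
       pairwise_stable b c gamma g -> efficient b c g).
Proof.
have hb2 : 0 < b 2%N := b_pos hb (isT : (0 < 2)%N).
split; [|split].
- move=> hc n g hv; have [hn hempty] := visited_high_cost hb hc hv.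
  by split=> //; subst n; apply: single_node_efficient; rewrite hempty.
- move=> hlo hc hc0 n g hv _.
  have hbc : b 1%N - c <= (1 - gamma) * b 2%N by rewrite mulrBl mul1r; lra.
  have [ctr hst] := visited_star hb hg0 hg1 hbc hc hc0 hv.
  apply: (star_efficient hb hst); first exact: ltW.
  by have := mulr_ge0 hg0 (ltW hb2); lra.
- move=> hlow _ n g _ hps; have hbc : b 2%N < b 1%N - c by lra.
  exact/(complete_efficient hb hbc)/(stable_complete hb hg0 hg1 hbc hps).
Qed.
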